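(* Let $G$ be a graph containing a pendant block isomorphic to $K_r$ with $r\ge 3$, whose cutpoint is $v$. Then \[ |M_G|=\binom{r-1}{2}\,|M_{G-K_r}|+\sum_{p\in N(v)}|M_{G-(N[v]\cup N[p])}|, \] where $G-K_r$ denotes the graph obtained from $G$ by deleting all $r$ vertices of this block (including $v$).
   Context: Graphs are finite, simple, undirected. A block is a maximal $2$-connected subgraph; a pendant block is a block containing exactly one cutpoint of $G$. An induced matching is a matching whose endpoints induce a $1$-regular subgraph; it is maximal if not properly contained in another induced matching; $M_G$ is the set of maximal induced matchings of $G$ (a graph with no edges has exactly one, the empty matching). For $S\subseteq V(G)$, $G-S$ is the subgraph induced by $V(G)\setminus S$; $N(v)$, $N[v]$ are the open and closed neighborhoods. *)

(* A finite simple graph G is given by a finite vertex type T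
   (vertex set = all of T) and a symmetric irreflexive adjacency relation e. *)
From mathcomp Require Import all_boot.
Set Implicit Arguments. Unset Strict Implicit. Unset Printing Implicit Defensive.

Section Graphs.
Variables (T : finType) (e : rel T).

Definition simple_graph := irreflexive e /\ symmetric e.

Definition N (v : T) : {set T} := [set u | e v u].
Definition Nc (v : T) : {set T} := v |: N v.

Definition joined (f : rel T) (W : {set T}) (x y : T) : bool :=
  connect [rel a b | [&& f a b, a \in W & b \in W]] x y.

Definition connected_on (f : rel T) (W : {set T}) : Prop :=
  forall x y, x \in W -> y \in W -> joined f W x y.

(* v is a cutpoint of G: deleting v disconnects two vertices that are
   connected in G (i.e. G - v has more components than G) *)
Definition cutpoint (v : T) : Prop :=
  exists x y, [/\ x != v, y != v, joined e setT x y &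
                  ~~ joined e (setT :\ v) x y].

Definition subgraph (B : {set T}) (F : {set T * T}) : Prop :=
  (forall p, p \in F -> [&& e p.1 p.2, p.1 \in B & p.2 \in B]) /\
  (forall x y, (x, y) \in F -> (y, x) \in F).

Definition subrel (F : {set T * T}) : rel T := fun a b => (a, b) \in F.

Definition two_connected (B : {set T}) (F : {set T * T}) : Prop :=
  [/\ 3 <= #|B|, connected_on (subrel F) B &
      forall w, w \in B -> connected_on (subrel F) (B :\ w)].

Definition block (B : {set T}) (F : {set T * T}) : Prop :=
  [/\ subgraph B F, two_connected B F &
      forall B' F', subgraph B' F' -> two_connected B' F' ->
        B \subset B' -> F \subset F' -> B = B' /\ F = F'].

Definition complete_subgraph (r : nat) (B : {set T}) (F : {set T * T}) : Prop :=
  #|B| = r /\ (forall x y, x \in B -> y \in B -> x != y -> (x, y) \in F).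

Definition pendant_block_at (B : {set T}) (F : {set T * T}) (v : T) : Prop :=
  [/\ block B F, v \in B, cutpoint v &
      forall u, u \in B -> cutpoint u -> u = v].

Definition endpoints (M : {set {set T}}) : {set T} := cover M.

(* M is an induced matching of G[W]: a matching of G[W] (edges are 2-sets
   {x,y} with x,y in W adjacent, pairwise disjoint) whose endpoints induce a
   1-regular subgraph of G *)
Definition induced_matching (W : {set T}) (M : {set {set T}}) : bool :=
  [&& [forall m in M, exists x, exists y,
        [&& m == [set x; y], x \in W, y \in W & e x y]],
      trivIset M &
      [forall x in endpoints M, #|[set y in endpoints M | e x y]| == 1]].

Definition maximal_induced_matching (W : {set T}) (M : {set {set T}}) : bool :=
  induced_matching W M &&
  [forall M' : {set {set T}}, (induced_matching W M' && (M \subset M')) ==> (M' == M)].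

Definition MIM (W : {set T}) : {set {set {set T}}} :=
  [set M | maximal_induced_matching W M].

End Graphs.

(* Every maximal induced matching M of G contains exactly one edge meeting the
   pendant clique B.  A vertex x <> v of B has no neighbour outside B (otherwise
   B together with an ear through G - x would be a larger 2-connected
   subgraph), so maximality applied to an edge inside B - v yields an edge of M
   meeting B, while two distinct edges of an induced matching never both meet a
   clique.  Sort M by this edge xy: M |-> M - {xy} is a bijection from the
   maximal induced matchings containing xy onto those of G - (N[x] u N[y]),
   which is G - B when xy lies inside B - v, and G - (N[v] u N[p]) when xy = vp. *)

From Pilot Require Import Defs.
From mathcomp Require Import all_boot.
Set Implicit Arguments. Unset Strict Implicit. Unset Printing Implicit Defensive.

Lemma card_by_unique_label (K J : finType) (X : {set K}) (L : {set J})
    (R : K -> J -> bool) :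
  (forall x, x \in X -> exists2 j, j \in L & R x j) ->
  (forall x j1 j2, x \in X -> j1 \in L -> j2 \in L -> R x j1 -> R x j2 -> j1 = j2) ->
  #|X| = \sum_(j in L) #|[set x in X | R x j]|.
Proof.
move=> label_ex label_uniq; rewrite -sum1_card.
transitivity (\sum_(x in X) \sum_(j in L) (R x j : nat)).
  apply: eq_bigr => x xX; have [j jL Rxj] := label_ex x xX.
  rewrite (bigD1 j) //= Rxj big1 // => j' /andP [j'L j'j].
  by apply/eqP; rewrite eqb0; apply: contraNN j'j => Rxj'; rewrite (label_uniq x j' j).
rewrite exchange_big; apply: eq_bigr => j _.
rewrite -sum1_card [LHS]big_mkcond [RHS]big_mkcond; apply: eq_bigr => x _.
by rewrite inE; case: (x \in X); case: (R x j).
Qed.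

Section InducedMatchings.
Variables (T : finType) (e : rel T).
Hypotheses (e_irr : irreflexive e) (e_sym : symmetric e).

Definition edges_in (W : {set T}) (M : {set {set T}}) : Prop :=
  forall m, m \in M -> exists x y, [/\ m = [set x; y], x \in W, y \in W & e x y].

Definition separated (M : {set {set T}}) : Prop :=
  forall m1 m2 a b, m1 \in M -> m2 \in M -> m1 != m2 -> a \in m1 -> b \in m2 ->
    a != b /\ ~~ e a b.

Definition dominating (W : {set T}) (M : {set {set T}}) : Prop :=
  forall a b, a \in W -> b \in W -> e a b ->
    exists2 c, c \in cover M & c \in Nc e a :|: Nc e b.

Lemma mem_Nc_sym a c : (c \in Nc e a) = (a \in Nc e c).
Proof. by rewrite !inE eq_sym e_sym. Qed.

Lemma edge_partner m x y a : m = [set x; y] -> e x y -> a \in m ->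
  exists2 a', m = [set a; a'] & e a a'.
Proof.
move=> -> exy; rewrite in_set2 => /orP [/eqP -> | /eqP ->]; first by exists y.
by exists x; rewrite 1?setUC // e_sym.
Qed.

Lemma edges_in_mem W M m a : edges_in W M -> m \in M -> a \in m -> a \in W.
Proof.
by move=> edM mM; have [x [y [-> xW yW _]]] := edM m mM; case/set2P=> ->.
Qed.

Lemma separated_notin_Nc M m1 m2 x y b : separated M -> m1 \in M -> m2 \in M ->
  m1 != m2 -> m1 = [set x; y] -> b \in m2 -> b \notin Nc e x :|: Nc e y.
Proof.
move=> sepM m1M m2M m12 m1E bm2; rewrite !inE !negb_or.
have xm1 : x \in m1 by rewrite m1E set21.
have ym1 : y \in m1 by rewrite m1E set22.
have [xb exb] := sepM _ _ _ _ m1M m2M m12 xm1 bm2.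
have [yb eyb] := sepM _ _ _ _ m1M m2M m12 ym1 bm2.
by rewrite eq_sym xb eq_sym yb exb eyb.
Qed.

Lemma induced_matchingP W M :
  induced_matching e W M <-> edges_in W M /\ separated M.
Proof.
split.
- case/and3P=> /forall_inP edM /trivIsetP disjM /forall_inP degM.
  have {}edM : edges_in W M.
    move=> m /edM /existsP [x /existsP [y /and4P [/eqP -> xW yW exy]]].
    by exists x, y.
  split=> // m1 m2 a b m1M m2M m12 am1 bm2.
  have dis := disjM _ _ m1M m2M m12.
  have ab : a != b by apply: contraTneq bm2 => <-; rewrite (disjointFr dis am1).
  split=> //; apply/negP => eab.
  have [x [y [m1E _ _ exy]]] := edM _ m1M.
  have [a' m1aE eaa'] := edge_partner m1E exy am1.
  have acov : a \in endpoints M by apply/bigcupP; exists m1.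
  have /cards1P [c nbE] := degM a acov.
  have : b \in [set z in endpoints M | e a z].
    by rewrite inE eab andbT; apply/bigcupP; exists m2.
  have : a' \in [set z in endpoints M | e a z].
    by rewrite inE eaa' andbT; apply/bigcupP; exists m1; rewrite // m1aE set22.
  rewrite nbE !inE => /eqP a'c /eqP bc.
  by move: (disjointFl dis bm2); rewrite bc -a'c m1aE set22.
- case=> edM sepM; apply/and3P; split.
  + apply/forall_inP => m mM; have [x [y [-> xW yW exy]]] := edM m mM.
    by apply/existsP; exists x; apply/existsP; exists y; rewrite eqxx xW yW exy.
  + apply/trivIsetP => m1 m2 m1M m2M m12; apply/pred0P => c /=.
    apply/negP => /andP [cm1 cm2].
    by have [] := sepM _ _ _ _ m1M m2M m12 cm1 cm2; rewrite eqxx.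
  + apply/forall_inP => a /bigcupP [m mM am].
    have [x [y [mE _ _ exy]]] := edM m mM.
    have [a' maE eaa'] := edge_partner mE exy am.
    apply/cards1P; exists a'; apply/setP => c; rewrite !inE.
    apply/andP/eqP => [[/bigcupP [m2 m2M cm2] eac] | ->].
      case: (eqVneq m m2) => [mm2 | m12]; last first.
        by have [_] := sepM _ _ _ _ mM m2M m12 am cm2; rewrite eac.
      by move: cm2; rewrite -mm2 maE => /set2P [ca | //]; rewrite ca e_irr in eac.
    by split=> //; apply/bigcupP; exists m; rewrite // maE set22.
Qed.

Lemma separated_setU1 M x y : separated M ->
  (forall c, c \in cover M -> c \notin Nc e x :|: Nc e y) ->
  separated ([set x; y] |: M).
Proof.
move=> sepM farM.
have far b c : b \in [set x; y] -> c \in cover M -> b != c /\ ~~ e b c.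
  move=> bxy /farM; rewrite !inE !negb_or => /andP [/andP [cx exc] /andP [cy eyc]].
  by case/set2P: bxy => ->; rewrite eq_sym ?cx ?cy.
have inc m c : m \in M -> c \in m -> c \in cover M by move=> mM cm; apply/bigcupP; exists m.
move=> m1 m2 a b; rewrite !in_setU1.
case/orP=> [/eqP -> | m1M] /orP [/eqP -> | m2M] m12 am1 bm2.
- by rewrite eqxx in m12.
- exact: far (inc _ _ m2M bm2).
- by have [] := far b a bm2 (inc _ _ m1M am1); rewrite eq_sym e_sym.
- exact: sepM m1M m2M m12 am1 bm2.
Qed.

Lemma MIMP W M :
  M \in MIM e W <-> [/\ edges_in W M, separated M & dominating W M].
Proof.
rewrite inE; split.
- case/andP=> /induced_matchingP [edM sepM] /forallP maxM; split=> // a b aW bW eab.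
  have [/exists_inP [c cM cN] | farM] :=
    boolP [exists c in cover M, c \in Nc e a :|: Nc e b]; first by exists c.
  have M'im : induced_matching e W ([set a; b] |: M).
    apply/induced_matchingP; split.
      by move=> m /setU1P [-> | /edM //]; exists a, b.
    apply: separated_setU1 => // c cM; apply: contra farM => cN.
    by apply/exists_inP; exists c.
  move: (maxM ([set a; b] |: M)); rewrite M'im subsetUr => /eqP M'E.
  have acov : a \in cover M.
    by apply/bigcupP; exists [set a; b]; [rewrite -M'E setU11 | rewrite set21].
  by case/negP: farM; apply/exists_inP; exists a; rewrite // !inE eqxx.
- case=> edM sepM domM; apply/andP; split; first exact/induced_matchingP.
  apply/forallP => M'; apply/implyP => /andP [/induced_matchingP [edM' sepM'] sMM'].
  rewrite eqEsubset sMM' andbT; apply/subsetP => m mM'; apply/negPn/negP => mM.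
  have [a [b [mE aW bW eab]]] := edM' m mM'.
  have [c /bigcupP [m0 m0M cm0] cN] := domM a b aW bW eab.
  have far z : z \in m -> c != z /\ ~~ e z c.
    move=> zm; have m0m : m != m0 by apply: contraNneq mM => ->.
    by have [zc ezc] := sepM' _ _ _ _ mM' (subsetP sMM' _ m0M) m0m zm cm0; rewrite eq_sym.
  have [ca eac] : c != a /\ ~~ e a c by apply: far; rewrite mE set21.
  have [cb ebc] : c != b /\ ~~ e b c by apply: far; rewrite mE set22.
  by move: cN; rewrite !inE (negbTE ca) (negbTE cb) (negbTE eac) (negbTE ebc).
Qed.

Lemma separated_clique_meet M (K : {set T}) m1 m2 a b : separated M ->
  {in K &, forall k1 k2, k1 != k2 -> e k1 k2} -> m1 \in M -> m2 \in M ->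
  a \in m1 :&: K -> b \in m2 :&: K -> m1 = m2.
Proof.
move=> sepM cliqueK m1M m2M /setIP [am1 aK] /setIP [bm2 bK].
apply/eqP/negPn/negP => m12; have [ab /negP []] := sepM _ _ _ _ m1M m2M m12 am1 bm2.
exact: cliqueK.
Qed.

End InducedMatchings.

Section ThroughEdge.
Variables (T : finType) (e : rel T).
Hypotheses (e_irr : irreflexive e) (e_sym : symmetric e).
Variables (x y : T).
Hypothesis exy : e x y.

Let W := ~: (Nc e x :|: Nc e y).

Lemma edge_notin_Nc a c : a \in W -> c \in [set x; y] -> c \notin Nc e a.
Proof.
rewrite in_setC in_setU negb_or => /andP [ax ay].
by case/set2P=> ->; rewrite mem_Nc_sym.
Qed.

Lemma edge_notin_MIM M : M \in MIM e W -> [set x; y] \notin M.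
Proof.
case/MIMP=> // edM _ _; apply/negP => xyM.
by have := edges_in_mem edM xyM (set21 x y); rewrite in_setC in_setU setU11.
Qed.

Lemma MIM_setU1_edge M : M \in MIM e W -> [set x; y] |: M \in MIM e setT.
Proof.
case/MIMP=> // edM sepM domM; apply/MIMP => //; split.
- move=> m /setU1P [-> | mM]; first by exists x, y; rewrite !inE.
  by have [a [b [-> _ _ eab]]] := edM m mM; exists a, b; rewrite !inE.
- apply: separated_setU1 => // c /bigcupP [m mM cm].
  by have := edges_in_mem edM mM cm; rewrite in_setC.
- have cov_xy c : c \in [set x; y] -> c \in cover ([set x; y] |: M).
    by move=> cxy; apply/bigcupP; exists [set x; y]; rewrite ?setU11.
  have near z : z \notin W -> exists2 c, c \in cover ([set x; y] |: M) & c \in Nc e z.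
    rewrite in_setC negbK => /setUP [] zN; [exists x | exists y];
      by rewrite ?cov_xy ?set21 ?set22 // mem_Nc_sym.
  move=> a b _ _ eab.
  have [aW | /near [c cM cN]] := boolP (a \in W); last by exists c; rewrite // in_setU cN.
  have [bW | /near [c cM cN]] := boolP (b \in W).
    have [c /bigcupP [m mM cm] cN] := domM a b aW bW eab.
    by exists c => //; apply/bigcupP; exists m; rewrite // setU1r.
  by exists c; rewrite // in_setU cN orbT.
Qed.

Lemma MIM_setD1_edge M :
  M \in MIM e setT -> [set x; y] \in M -> M :\ [set x; y] \in MIM e W.
Proof.
case/MIMP=> // edM sepM domM xyM; apply/MIMP => //; split.
- move=> m /setD1P [mxy mM]; have [a [b [mE _ _ eab]]] := edM m mM.
  have far c : c \in m -> c \in W.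
    by move=> cm; rewrite in_setC (separated_notin_Nc sepM xyM mM) // eq_sym.
  by exists a, b; rewrite !far ?mE ?set21 ?set22.
- by move=> m1 m2 a b /setD1P [_ m1M] /setD1P [_ m2M]; apply: sepM.
- move=> a b aW bW eab.
  have [c /bigcupP [m mM cm] cN] := domM a b (in_setT a) (in_setT b) eab.
  exists c => //; apply/bigcupP; exists m; rewrite // in_setD1 mM andbT.
  by apply: contraTneq cN => mxy; rewrite in_setU negb_or !edge_notin_Nc // -mxy.
Qed.

Lemma card_MIM_through_edge :
  #|[set M in MIM e setT | [set x; y] \in M]| = #|MIM e W|.
Proof.
rewrite -(@card_in_imset _ _ (fun M => [set x; y] |: M) (mem (MIM e W))).
  apply: eq_card => M; rewrite inE; apply/andP/imsetP.
  - case=> MM xyM; exists (M :\ [set x; y]); first exact: MIM_setD1_edge.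
    by rewrite setD1K.
  - by case=> M' M'M ->; split; [exact: MIM_setU1_edge | exact: setU11].
move=> M1 M2 M1M M2M eq12.
by rewrite -(setU1K (edge_notin_MIM M1M)) -(setU1K (edge_notin_MIM M2M)) eq12.
Qed.

End ThroughEdge.

Lemma path_first_entry (T : Type) (R : rel T) (P : pred T) a p :
  ~~ P a -> P (last a p) -> path R a p ->
  exists s b, [/\ path R a s, all (predC P) (a :: s), R (last a s) b & P b].
Proof.
elim: p a => [|c p IH] a /=; first by move=> /negbTE ->.
move=> nPa Plast /andP [Rac pcp].
have [Pc | nPc] := boolP (P c); first by exists [::], c; rewrite /= nPa.
have [s [b [pcs alls Rlast Pb]]] := IH c nPc Plast pcp.
by exists (c :: s), b; split=> //=; rewrite ?Rac ?nPa.
Qed.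

Section Connectivity.
Variables (T : finType) (e : rel T).
Hypothesis e_sym : symmetric e.
Implicit Types K W : {set T}.

Lemma joined_sym W : symmetric (joined e W).
Proof.
by apply: sym_connect_sym => a b /=; rewrite e_sym andbA [(b \in W) && _]andbC -andbA.
Qed.

Lemma joined_trans W : transitive (joined e W).
Proof. exact: connect_trans. Qed.

Lemma joined_edge W a b : e a b -> a \in W -> b \in W -> joined e W a b.
Proof. by move=> eab aW bW; apply: connect1; rewrite /= eab aW bW. Qed.

Lemma joined_sub W1 W2 a b : W1 \subset W2 -> joined e W1 a b -> joined e W2 a b.
Proof.
move=> sW; apply: connect_sub => c d /and3P [ecd cW dW].
by apply: joined_edge; rewrite // (subsetP sW).
Qed.

Lemma path_joined W a s c :
  path e a s -> {subset a :: s <= W} -> c \in a :: s -> joined e W a c.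
Proof.
move=> pas sW; apply: path_connect; apply: (@sub_in_path _ (mem W) e) pas.
  by move=> u v uW vW euv; rewrite /= euv uW vW.
exact/allP.
Qed.

Lemma path_joined_end W w a s c : path e a s -> uniq (a :: s) ->
  (forall u, u \in a :: s -> u != w -> u \in W) -> c \in a :: s -> c != w ->
  exists2 z, (z \in [:: a; last a s]) && (z != w) & joined e W c z.
Proof.
elim: s a => [|b s IH] a.
  move=> _ _ _; rewrite mem_seq1 => /eqP -> aw.
  by exists a; rewrite ?inE ?eqxx ?aw //; apply: connect0.
rewrite /= => /andP [eab pbs] /andP [a_bs uniq_bs] sW.
case: (eqVneq c a) => [-> _ aw | ca cbs cw].
  by exists a; rewrite ?inE ?eqxx ?aw //; apply: connect0.
have {}cbs : c \in b :: s by move: cbs; rewrite inE (negbTE ca).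
have sW' u : u \in b :: s -> u != w -> u \in W by move=> us; apply: sW; rewrite inE us orbT.
have [z /andP [zends zw] jcz] := IH b pbs uniq_bs sW' cbs cw.
move: zends; rewrite !inE => /orP [/eqP zb | zl]; last first.
  by exists z; rewrite // !inE zl zw orbT.
case: (eqVneq a w) => [aw | aw].
  have bs_w u : u \in b :: s -> u != w.
    by move=> us; apply: contraNneq a_bs => uw; rewrite aw -uw.
  have lbs := mem_last b s; exists (last b s); first by rewrite !inE eqxx orbT bs_w.
  have sWbs : {subset b :: s <= W} by move=> u us; rewrite sW' ?bs_w.
  rewrite joined_sym in jcz; apply: joined_trans (path_joined pbs sWbs lbs).
  by rewrite joined_sym (path_joined pbs sWbs cbs).
exists a; first by rewrite !inE eqxx aw.
have bw : b != w by rewrite -zb.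
rewrite zb in jcz; apply: joined_trans jcz (joined_edge _ _ _).
- by rewrite e_sym.
- by rewrite sW // !inE eqxx orbT.
- by rewrite sW // !inE eqxx.
Qed.

Lemma connected_on_clique_reach K W :
  {in K &, forall k1 k2, k1 != k2 -> e k1 k2} ->
  (forall c, c \in W -> exists2 k, k \in K :&: W & joined e W c k) ->
  connected_on e W.
Proof.
move=> cliqueK reach y1 y2 /reach [k1 /setIP [k1K k1W] j1] /reach [k2 /setIP [k2K k2W] j2].
rewrite joined_sym in j2; apply: joined_trans j1 (joined_trans _ j2).
case: (eqVneq k1 k2) => [-> | k12]; first exact: connect0.
exact: joined_edge (cliqueK _ _ k1K k2K k12) k1W k2W.
Qed.

Lemma connected_on_of_deletions W : 3 <= #|W| ->
  (forall w, w \in W -> connected_on e (W :\ w)) -> connected_on e W.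
Proof.
move=> W3 delW y1 y2 y1W y2W.
have : 0 < #|W :\: [set y1; y2]|.
  rewrite cardsD subn_gt0; apply: leq_ltn_trans W3.
  by apply: leq_trans (subset_leq_card (subsetIr W _)) _; rewrite cards2; case: (y1 != y2).
case/card_gt0P => w /setDP [wW]; rewrite in_set2 negb_or => /andP [wy1 wy2].
apply: joined_sub (subD1set W w) (delW w wW y1 y2 _ _);
  by rewrite in_setD1 eq_sym ?wy1 ?wy2.
Qed.

Lemma clique_ear_deletions K a p :
  {in K &, forall k1 k2, k1 != k2 -> e k1 k2} ->
  path e a p -> uniq (a :: p) -> a \in K -> last a p \in K ->
  forall w, connected_on e ((K :|: [set u in p]) :\ w).
Proof.
move=> cliqueK pap uap aK lK w; apply: connected_on_clique_reach cliqueK _ => c.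
rewrite in_setD1 in_setU inE => /andP [cw /orP [cK | cp]].
  by exists c; rewrite ?inE ?cw ?cK //; apply: connect0.
have inW u : u \in a :: p -> u != w -> u \in (K :|: [set u in p]) :\ w.
  by rewrite inE in_setD1 in_setU inE => /orP [/eqP -> | ->] ->; rewrite ?aK ?orbT.
have cap : c \in a :: p by rewrite inE cp orbT.
have [z /andP [zends zw] jcz] := path_joined_end pap uap inW cap cw.
have zK : z \in K by move: zends; rewrite mem_seq2 => /orP [] /eqP ->.
have zap : z \in a :: p.
  by move: zends; rewrite mem_seq2 => /orP [] /eqP ->; rewrite ?mem_head ?mem_last.
by exists z; rewrite // in_setI zK inW.
Qed.

Lemma ear_at_noncut K x z w : x \in K -> z \notin K -> e x z -> w \in K ->
  joined e (setT :\ x) z w ->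
  exists p, [/\ path e x p, uniq (x :: p), last x p \in K & z \in p].
Proof.
move=> xK zK exz wK /connectP [q pq wE].
have lqK : last z q \in K by rewrite -wE.
have [s [b [ps /allP outs /and3P [elb _ bx] bK]]] :=
  path_first_entry (P := [pred u | u \in K]) zK lqK pq.
have pzs : path e z s by apply: sub_path ps => a c /and3P [].
move: elb; case: (shortenP pzs) => s' pzs' uzs' ss' elb.
have out u : u \in z :: s' -> u \notin K.
  by rewrite inE => /orP [/eqP -> // | /ss' us]; apply: outs; rewrite inE us orbT.
exists (rcons (z :: s') b); split.
- by rewrite rcons_path /= exz pzs' elb.
- have bzs : b \notin z :: s' := contraL (out b) bK.
  have xzs : x \notin z :: s' := contraL (out x) xK.
  move: bx; rewrite in_setD1 => /andP [bx _].
  by rewrite -rcons_cons rcons_uniq inE negb_or bx bzs /= xzs.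
- by rewrite last_rcons.
- by rewrite mem_rcons !inE eqxx orbT.
Qed.

End Connectivity.

Section CompleteBlock.
Variables (T : finType) (e : rel T).
Hypothesis e_sym : symmetric e.
Implicit Types U W : {set T}.

Definition induced_edges U : {set T * T} :=
  [set q | [&& e q.1 q.2, q.1 \in U & q.2 \in U]].

Lemma subgraph_induced U : subgraph e U (induced_edges U).
Proof. by split=> [q | a b]; rewrite !inE //= e_sym => /and3P [-> -> ->]. Qed.

Lemma joined_induced U W :
  W \subset U -> joined (Defs.subrel (induced_edges U)) W =2 joined e W.
Proof.
move=> sWU; apply: eq_connect => a b; rewrite /= /Defs.subrel inE /=.
apply/and3P/and3P => [[/and3P [-> _ _] -> ->] // | [eab aW bW]].
by rewrite eab aW bW !(subsetP sWU).
Qed.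

Lemma two_connected_induced U : 3 <= #|U| ->
  (forall w, w \in U -> connected_on e (U :\ w)) -> two_connected U (induced_edges U).
Proof.
move=> U3 delU.
have lift W :
    W \subset U -> connected_on e W -> connected_on (Defs.subrel (induced_edges U)) W.
  by move=> sWU connW a b aW bW; rewrite joined_induced // connW.
split=> //; first exact: lift (subxx U) (connected_on_of_deletions U3 delU).
by move=> w wU; apply: lift (subD1set U w) (delU w wU).
Qed.

Lemma block_absorbs B F U : block e B F -> B \subset U ->
  two_connected U (induced_edges U) -> U = B.
Proof.
case=> [[subF _] _ maxB] sBU U2.
have sFU : F \subset induced_edges U.
  by apply/subsetP => q /subF /and3P [eq q1 q2]; rewrite inE eq !(subsetP sBU).
by case: (maxB U _ (subgraph_induced U) U2 sBU sFU).
Qed.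

Variables (B : {set T}) (F : {set T * T}).
Hypotheses (blockB : block e B F)
  (completeB : forall x y, x \in B -> y \in B -> x != y -> (x, y) \in F).

Lemma block_clique : {in B &, forall x y, x != y -> e x y}.
Proof.
case: blockB => [[subF _] _ _] x y xB yB xy.
by have /and3P [] := subF _ (completeB xB yB xy).
Qed.

Lemma block_nbhd x z : x \in B -> ~ cutpoint e x -> e x z -> z \in B.
Proof.
move=> xB xncut exz; apply/negPn/negP => zB.
have [_ [B3 _ _] _] := blockB.
have /card_gt0P [w /setD1P [wx wB]] : 0 < #|B :\ x|.
  by move: B3; rewrite (cardsD1 x B) xB; case: #|_|.
have zx : z != x by apply: contraNneq zB => ->.
have jzw : joined e (setT :\ x) z w.
  apply/negPn/negP => nj; apply: xncut; exists z, w; split=> //.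
  have ezx : e z x by rewrite e_sym.
  have exw : e x w by rewrite block_clique // eq_sym.
  exact: joined_trans (joined_edge ezx _ _) (joined_edge exw _ _).
have [p [pp up lp zp]] := ear_at_noncut xB zB exz wB jzw.
pose U := B :|: [set u in p].
have U2 : two_connected U (induced_edges U).
  apply: two_connected_induced; first exact: leq_trans B3 (subset_leq_card (subsetUl _ _)).
  by move=> w' _; apply: clique_ear_deletions block_clique pp up xB lp w'.
have /setP /(_ z) := block_absorbs blockB (subsetUl B _) U2.
by rewrite !inE zp orbT (negbTE zB).
Qed.

End CompleteBlock.

Section PendantClique.
Variables (T : finType) (e : rel T).
Hypotheses (e_irr : irreflexive e) (e_sym : symmetric e).
Variables (B : {set T}) (v : T).
Hypotheses (vB : v \in B) (cliqueB : {in B &, forall x y, x != y -> e x y})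
  (nbhdB : forall x z, x \in B -> x != v -> e x z -> z \in B) (B3 : 3 <= #|B|).

Lemma Nc_pendant_clique x : x \in B -> x != v -> Nc e x = B.
Proof.
move=> xB xv; apply/setP => z; rewrite !inE.
apply/orP/idP => [[/eqP -> // | /(nbhdB xB xv) //] | zB].
by case: (eqVneq z x) => [| zx]; [left | right; rewrite cliqueB // eq_sym].
Qed.

(* The label of a maximal induced matching is its unique edge meeting B. *)
Let inner_edges := [set A : {set T} | A \subset B :\ v & #|A| == 2].
Let spokes := [set [set v; p] | p in N e v].
Let labels := inner_edges :|: spokes.

Lemma inner_edgeP A : A \in inner_edges ->
  exists x y, [/\ A = [set x; y], x != y, x \in B :\ v & y \in B :\ v].
Proof.
rewrite inE => /andP [/subsetP AB /cards2P [x [y [xy AE]]]].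
by exists x, y; rewrite !AB ?AE ?set21 ?set22.
Qed.

Lemma label_meets_block A : A \in labels -> exists a, a \in A :&: B.
Proof.
case/setUP => [/inner_edgeP [x [y [-> _ /setD1P [_ xB] _]]] | /imsetP [p _ ->]].
  by exists x; rewrite inE set21.
by exists v; rewrite inE set21.
Qed.

Lemma MIM_has_label M : M \in MIM e setT -> exists2 A, A \in labels & A \in M.
Proof.
case/MIMP=> // edM sepM domM.
have [/bigcupP [m mM vm] | vM] := boolP (v \in cover M).
  have [x [y [mE _ _ exy]]] := edM m mM; have [p mvE evp] := edge_partner e_sym mE exy vm.
  by exists m; rewrite // in_setU mvE; apply/orP; right; apply: imset_f; rewrite inE.
have {}vM c : c \in cover M -> c != v by move=> cM; apply: contraNneq vM => <-.
have /card_gt1P [x [y [xB yB xy]]] : 1 < #|B :\ v|.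
  by move: B3; rewrite (cardsD1 v B) vB.
move: xB yB; rewrite !in_setD1 => /andP [xv xB] /andP [yv yB].
have [c /bigcupP [m mM cm]] := domM x y (in_setT x) (in_setT y) (cliqueB xB yB xy).
rewrite !Nc_pendant_clique // setUid => cB.
have inM u : u \in m -> u \in cover M by move=> um; apply/bigcupP; exists m.
have [x' [y' [mE _ _ exy']]] := edM m mM.
have [d mcE ecd] := edge_partner e_sym mE exy' cm.
have cv := vM c (inM c cm).
have dv : d != v by apply/vM/inM; rewrite mcE set22.
have dB := nbhdB cB cv ecd.
have cd : c != d by apply: contraTneq ecd => ->; rewrite e_irr.
exists m => //; rewrite in_setU inE mcE cards2 cd andbT; apply/orP; left.
by apply/subsetP => u /set2P [] ->; rewrite in_setD1 ?cv ?cB ?dv ?dB.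
Qed.

Lemma MIM_label_unique M A1 A2 : M \in MIM e setT ->
  A1 \in labels -> A2 \in labels -> A1 \in M -> A2 \in M -> A1 = A2.
Proof.
case/MIMP=> // _ sepM _ /label_meets_block [a a1] /label_meets_block [b b2] A1M A2M.
exact: separated_clique_meet sepM cliqueB A1M A2M a1 b2.
Qed.

Lemma card_MIM_pendant_clique :
  #|MIM e setT| = 'C(#|B :\ v|, 2) * #|MIM e (~: B)|
                  + \sum_(p in N e v) #|MIM e (~: (Nc e v :|: Nc e p))|.
Proof.
rewrite (card_by_unique_label MIM_has_label MIM_label_unique).
rewrite (eq_bigl [predU inner_edges & spokes]) => [|A]; last by rewrite !inE.
rewrite bigU; last first.
  apply/pred0P => A /=; apply/negP => /andP [/inner_edgeP [x [y [-> _ xBv yBv]]]].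
  case/imsetP => p _ /setP /(_ v); rewrite set21 => /set2P [] vE.
    by move: xBv; rewrite -vE setD11.
  by move: yBv; rewrite -vE setD11.
congr (_ + _).
  rewrite -cards_draws -sum_nat_const; apply: eq_bigr => A /inner_edgeP [x [y [-> xy]]].
  rewrite !in_setD1 => /andP [xv xB] /andP [yv yB].
  by rewrite card_MIM_through_edge ?Nc_pendant_clique ?setUid ?cliqueB.
rewrite big_imset /=; last first.
  move=> p q; rewrite !inE => evp evq /setP /(_ q); rewrite !in_set2 eqxx orbT.
  by case/orP => /eqP // qv; rewrite qv e_irr in evq.
by apply: eq_bigr => p; rewrite inE => evp; rewrite card_MIM_through_edge.
Qed.

End PendantClique.

Unset Implicit Arguments.

Theorem corollary2p8 (T : finType) (e : rel T) (r : nat)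
    (B : {set T}) (F : {set T * T}) (v : T) :
  simple_graph e -> 3 <= r ->
  pendant_block_at e B F v -> complete_subgraph r B F ->
  #|MIM e setT| =
    'C(r.-1, 2) * #|MIM e (~: B)|
    + \sum_(p in N e v) #|MIM e (~: (Nc e v :|: Nc e p))|.
Proof.
move=> [e_irr e_sym] r3 [blockB vB _ onlyv] [cardB completeB].
have nbhdB x z : x \in B -> x != v -> e x z -> z \in B.
  move=> xB xv; apply: (block_nbhd e_sym blockB completeB xB) => xcut.
  by case/eqP: xv; apply: onlyv.
have -> : r.-1 = #|B :\ v| by rewrite -cardB (cardsD1 v B) vB.
apply: card_MIM_pendant_clique => //; last by rewrite cardB.
exact: block_clique blockB completeB.
Qed.
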